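(* Let $\mathbb{C}$ be a pointed category with binary products. For objects $A,B$ write $\pi_1\colon A\times B\to A$, $\pi_2\colon A\times B\to B$ for the product projections, $\iota_1=(1_A,0)\colon A\to A\times B$ and $\iota_2=(0,1_B)\colon B\to A\times B$, and for morphisms $u\colon X\to A$, $v\colon X\to B$ write $(u,v)\colon X\to A\times B$ for the induced morphism; $0$ denotes a zero morphism. The following conditions are equivalent: (a) for all objects $A,B,C$ and every morphism $f\colon A\times B\to C$: if $f\circ\iota_1=0$ then $f=f\circ\iota_2\circ\pi_2$ (equivalently, $\pi_2\colon A\times B\to B$ is a cokernel of $\iota_1\colon A\to A\times B$); (b) for all objects $X,Y$ and every morphism $f\colon X\times X\to Y$: if $f\circ\iota_1=0$ then $f=f\circ\iota_2\circ\pi_2$ (equivalently, $\pi_2\colon X\times X\to X$ is a cokernel of $\iota_1=(1_X,0)\colon X\to X\times X$); (c) for all objects $X,Y$ and every morphism $f\colon X\times X\to Y$: if $f\circ(1_X,0)=0$ then $f\circ(1_X,1_X)=f\circ(0,1_X)$; (d) for all objects $A,B,C,X$ and all morphisms $f\colon A\times B\to C$, $a\colon X\to A$, $b\colon X\to B$: if $f\circ(a,0)=0$ then $f\circ(a,b)=f\circ(0,b)$; (e) for all objects $X,Y,U$ and all morphisms $f\colon X\times X\to Y$, $x\colon U\to X$: if $f\circ(x,0)=0$ then $f\circ(x,x)=f\circ(0,x)$.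
   Context: A pointed category is one with a zero object; $0$ denotes the zero morphism between any two objects. *)

Set Implicit Arguments.
Unset Strict Implicit.

Record Category := {
  Ob :> Type;
  Hom : Ob -> Ob -> Type;
  idm : forall A, Hom A A;
  comp : forall A B D, Hom B D -> Hom A B -> Hom A D;
  comp_assoc : forall A B E D (f : Hom A B) (g : Hom B E) (h : Hom E D),
      comp h (comp g f) = comp (comp h g) f;
  comp_id_l : forall A B (f : Hom A B), comp (idm B) f = f;
  comp_id_r : forall A B (f : Hom A B), comp f (idm A) = f
}.

Arguments idm {c} A.
Arguments comp {c A B D} g f.
Notation "g \o f" := (comp g f) (at level 40, left associativity).

Record PointedCategory := {
  pcat :> Category;
  zero_ob : pcat;
  from_zero : forall A : pcat, Hom zero_ob A;
  from_zero_uniq : forall (A : pcat) (f : Hom zero_ob A), f = from_zero A;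
  to_zero : forall A : pcat, Hom A zero_ob;
  to_zero_uniq : forall (A : pcat) (f : Hom A zero_ob), f = to_zero A
}.

Definition zmor (C : PointedCategory) (A B : C) : Hom A B :=
  @from_zero C B \o @to_zero C A.
Arguments zmor {C} A B.

Record BinProducts (C : Category) := {
  prodo : C -> C -> C;
  pr1 : forall A B : C, Hom (prodo A B) A;
  pr2 : forall A B : C, Hom (prodo A B) B;
  pairm : forall (X A B : C), Hom X A -> Hom X B -> Hom X (prodo A B);
  pr1_pair : forall X A B (u : Hom X A) (v : Hom X B), pr1 A B \o pairm u v = u;
  pr2_pair : forall X A B (u : Hom X A) (v : Hom X B), pr2 A B \o pairm u v = v;
  pair_uniq : forall X A B (u : Hom X A) (v : Hom X B) (h : Hom X (prodo A B)),
      pr1 A B \o h = u -> pr2 A B \o h = v -> h = pairm u v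
}.
Arguments prodo {C} b A B.
Arguments pr1 {C} b A B.
Arguments pr2 {C} b A B.
Arguments pairm {C} b {X A B} u v.

Definition iota1 (C : PointedCategory) (P : BinProducts C) (A B : C)
  : Hom A (prodo P A B) := pairm P (idm A) (zmor A B).
Definition iota2 (C : PointedCategory) (P : BinProducts C) (A B : C)
  : Hom B (prodo P A B) := pairm P (zmor B A) (idm B).
Arguments iota1 {C} P A B.
Arguments iota2 {C} P A B.

Definition cond_a (C : PointedCategory) (P : BinProducts C) : Prop :=
  forall (A B D : C) (f : Hom (prodo P A B) D),
    f \o iota1 P A B = zmor A D ->
    f = f \o iota2 P A B \o pr2 P A B.

Definition cond_b (C : PointedCategory) (P : BinProducts C) : Prop :=
  forall (X Y : C) (f : Hom (prodo P X X) Y),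
    f \o iota1 P X X = zmor X Y ->
    f = f \o iota2 P X X \o pr2 P X X.

Definition cond_c (C : PointedCategory) (P : BinProducts C) : Prop :=
  forall (X Y : C) (f : Hom (prodo P X X) Y),
    f \o pairm P (idm X) (zmor X X) = zmor X Y ->
    f \o pairm P (idm X) (idm X) = f \o pairm P (zmor X X) (idm X).

Definition cond_d (C : PointedCategory) (P : BinProducts C) : Prop :=
  forall (A B D X : C) (f : Hom (prodo P A B) D) (a : Hom X A) (b : Hom X B),
    f \o pairm P a (zmor X B) = zmor X D ->
    f \o pairm P a b = f \o pairm P (zmor X A) b.

Definition cond_e (C : PointedCategory) (P : BinProducts C) : Prop :=
  forall (X Y U : C) (f : Hom (prodo P X X) Y) (x : Hom U X),
    f \o pairm P x (zmor U X) = zmor U Y ->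
    f \o pairm P x x = f \o pairm P (zmor U X) x.

(* The substantial implications are (c) => (a) and (a) => (d); the others are
   specialisations.  For (c) => (a), apply (c) to f o (pi_1 x pi_2) on
   (A x B) x (A x B): precomposing with (1,0), (1,1), (0,1) yields f o iota_1 o pi_1,
   f and f o iota_2 o pi_2.  For (a) => (d), apply (a) to f o (a x 1) : X x B -> C
   and precompose with (1, b). *)

Section ProductsInPointedCategory.
Variables (C : PointedCategory) (P : BinProducts C).

Lemma zmor_comp (A B D : C) (g : Hom A B) : zmor B D \o g = zmor A D.
Proof. unfold zmor. rewrite <- comp_assoc. f_equal. apply to_zero_uniq. Qed.

Lemma comp_zmor (A B D : C) (h : Hom B D) : h \o zmor A B = zmor A D.
Proof. unfold zmor. rewrite comp_assoc. f_equal. apply from_zero_uniq. Qed.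

Lemma pairm_comp (Y X A B : C) (u : Hom X A) (v : Hom X B) (h : Hom Y X) :
  pairm P u v \o h = pairm P (u \o h) (v \o h).
Proof.
  apply pair_uniq; rewrite comp_assoc; [rewrite pr1_pair | rewrite pr2_pair]; reflexivity.
Qed.

Lemma pairm_pr_id (A B : C) : pairm P (pr1 P A B) (pr2 P A B) = idm (prodo P A B).
Proof. symmetry. apply pair_uniq; apply comp_id_r. Qed.

Lemma iota1_comp (X A B : C) (a : Hom X A) :
  iota1 P A B \o a = pairm P a (zmor X B).
Proof. unfold iota1. rewrite pairm_comp, comp_id_l, zmor_comp. reflexivity. Qed.

Lemma iota2_comp (X A B : C) (b : Hom X B) :
  iota2 P A B \o b = pairm P (zmor X A) b.
Proof. unfold iota2. rewrite pairm_comp, comp_id_l, zmor_comp. reflexivity. Qed.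

Definition prodm (A B A' B' : C) (u : Hom A A') (v : Hom B B') :
  Hom (prodo P A B) (prodo P A' B') :=
  pairm P (u \o pr1 P A B) (v \o pr2 P A B).
Arguments prodm {A B A' B'} u v.

Lemma prodm_pairm (X A B A' B' : C) (u : Hom A A') (v : Hom B B')
    (x : Hom X A) (y : Hom X B) :
  prodm u v \o pairm P x y = pairm P (u \o x) (v \o y).
Proof.
  unfold prodm. rewrite pairm_comp, <- !comp_assoc, pr1_pair, pr2_pair.
  reflexivity.
Qed.

Lemma cond_a_b : cond_a P -> cond_b P.
Proof. intros Ha X Y f. apply Ha. Qed.

Lemma cond_b_c : cond_b P -> cond_c P.
Proof.
  intros Hb X Y f Hf.
  transitivity (f \o iota2 P X X \o pr2 P X X \o pairm P (idm X) (idm X)).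
  { f_equal. exact (Hb X Y f Hf). }
  rewrite <- comp_assoc, pr2_pair, comp_id_r. reflexivity.
Qed.

Lemma cond_c_a : cond_c P -> cond_a P.
Proof.
  intros Hc A B D f Hf.
  set (g := f \o prodm (pr1 P A B) (pr2 P A B)).
  assert (Hg : g \o pairm P (idm _) (zmor _ _) = zmor (prodo P A B) D).
  { unfold g. rewrite <- comp_assoc, prodm_pairm, comp_id_r, comp_zmor, <- iota1_comp.
    rewrite comp_assoc, Hf. apply zmor_comp. }
  pose proof (Hc _ D g Hg) as E.
  unfold g in E.
  rewrite <- !comp_assoc, !prodm_pairm, !comp_id_r, comp_zmor, pairm_pr_id,
    comp_id_r in E.
  rewrite <- comp_assoc, iota2_comp. exact E.
Qed.

Lemma cond_a_d : cond_a P -> cond_d P.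
Proof.
  intros Ha A B D X f a b Hf.
  set (g := f \o prodm a (idm B)).
  assert (Hg : g \o iota1 P X B = zmor X D).
  { unfold g, iota1. rewrite <- comp_assoc, prodm_pairm, comp_id_r, comp_zmor.
    exact Hf. }
  assert (Eab : f \o pairm P a b = g \o pairm P (idm X) b).
  { unfold g. rewrite <- comp_assoc, prodm_pairm, comp_id_r, comp_id_l. reflexivity. }
  rewrite Eab, (Ha X B D g Hg).
  rewrite <- !comp_assoc, pr2_pair, iota2_comp.
  unfold g. rewrite <- comp_assoc, prodm_pairm, comp_zmor, comp_id_l. reflexivity.
Qed.

Lemma cond_d_e : cond_d P -> cond_e P.
Proof. intros Hd X Y U f x. apply Hd. Qed.

Lemma cond_e_c : cond_e P -> cond_c P.
Proof. intros He X Y f. apply He. Qed.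

End ProductsInPointedCategory.

Theorem theorem1p2 (C : PointedCategory) (P : BinProducts C) :
  (cond_a P <-> cond_b P) /\ (cond_a P <-> cond_c P) /\
  (cond_a P <-> cond_d P) /\ (cond_a P <-> cond_e P).
Proof.
  pose proof (@cond_a_b C P). pose proof (@cond_b_c C P).
  pose proof (@cond_c_a C P). pose proof (@cond_a_d C P).
  pose proof (@cond_d_e C P). pose proof (@cond_e_c C P).
  tauto.
Qed.
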